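(* For every state $\rho$ on $\mathbb{C}^d\otimes\mathbb{C}^d$, \[ E_R(\rho)\ge-\log\Big(\max\big\{\langle x\otimes y|\rho|x\otimes y\rangle:\ x,y\in\mathbb{C}^d,\ \|x\|=\|y\|=1\big\}\Big)-S(\rho). \]
   Context: Logarithms are base 2; $S$ is the von Neumann entropy. $E_R(\rho)=\inf\{S(\rho\|\sigma):\sigma\text{ separable across }\mathbb{C}^d:\mathbb{C}^d\}$ with $S(\rho\|\sigma)=\operatorname{tr}[\rho\log\rho-\rho\log\sigma]$. *)

From Stdlib Require Import Reals.
Open Scope R_scope.

Record C := mkC { Re : R; Im : R }.
Definition CR (r : R) : C := mkC r 0.
Definition Cadd (z w : C) : C := mkC (Re z + Re w) (Im z + Im w).
Definition Cmul (z w : C) : C :=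
  mkC (Re z * Re w - Im z * Im w) (Re z * Im w + Im z * Re w).
Definition Cconj (z : C) : C := mkC (Re z) (- Im z).
Definition Cnorm2 (z : C) : R := Re z * Re z + Im z * Im z.

Fixpoint Csum (n : nat) (f : nat -> C) : C :=
  match n with O => CR 0 | S m => Cadd (Csum m f) (f m) end.
Fixpoint Rsum (n : nat) (f : nat -> R) : R :=
  match n with O => 0 | S m => Rsum m f + f m end.

Definition log2 (x : R) : R := ln x / ln 2.

(* A vector of C^d : entries at indices i < d. *)
Definition vec := nat -> C.
(* A vector of C^d (x) C^d : entries indexed by (a,b), a,b < d. *)
Definition bvec := nat -> nat -> C.
(* An operator on C^d (x) C^d : matrix entry  <a b| rho |c e>  = rho a b c e. *)
Definition bop := nat -> nat -> nat -> nat -> C.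

Definition vinner (d : nat) (x y : vec) : C :=
  Csum d (fun i => Cmul (Cconj (x i)) (y i)).
Definition unit_vec (d : nat) (x : vec) : Prop := vinner d x x = CR 1.

Definition binner (d : nat) (u v : bvec) : C :=
  Csum d (fun a => Csum d (fun b => Cmul (Cconj (u a b)) (v a b))).

Definition quad (d : nat) (rho : bop) (w : bvec) : C :=
  Csum d (fun a => Csum d (fun b => Csum d (fun c => Csum d (fun e =>
    Cmul (Cconj (w a b)) (Cmul (rho a b c e) (w c e)))))).

Definition btrace (d : nat) (rho : bop) : C :=
  Csum d (fun a => Csum d (fun b => rho a b a b)).

Definition tensor (x y : vec) : bvec := fun a b => Cmul (x a) (y b).

Definition bop_eq (d : nat) (A B : bop) : Prop :=
  forall a b c e, (a < d)%nat -> (b < d)%nat -> (c < d)%nat -> (e < d)%nat ->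
    A a b c e = B a b c e.

Definition hermitian (d : nat) (rho : bop) : Prop :=
  forall a b c e, (a < d)%nat -> (b < d)%nat -> (c < d)%nat -> (e < d)%nat ->
    rho a b c e = Cconj (rho c e a b).

Definition psd (d : nat) (rho : bop) : Prop :=
  hermitian d rho /\ forall w : bvec, 0 <= Re (quad d rho w).

Definition is_state (d : nat) (rho : bop) : Prop :=
  psd d rho /\ btrace d rho = CR 1.

Definition rank1_sum (n : nat) (lam : nat -> R) (u : nat -> bvec) : bop :=
  fun a b c e => Csum n (fun k => Cmul (CR (lam k)) (Cmul (u k a b) (Cconj (u k c e)))).

Definition spectral (d : nat) (rho : bop) (lam : nat -> R) (u : nat -> bvec) : Prop :=
  (forall k l, (k < d * d)%nat -> (l < d * d)%nat ->
     binner d (u k) (u l) = CR (if Nat.eqb k l then 1 else 0)) /\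
  bop_eq d rho (rank1_sum (d * d) lam u).

(* von Neumann entropy S(rho) = - tr rho log rho (base 2, 0 log 0 = 0). *)
Definition vN_entropy (d : nat) (rho : bop) (s : R) : Prop :=
  exists lam u, spectral d rho lam u /\
    s = - Rsum (d * d) (fun k => lam k * log2 (lam k)).

(* Quantum relative entropy S(rho||sigma) = tr[rho log rho - rho log sigma],
   computed from spectral decompositions rho = sum p_i |u_i><u_i|,
   sigma = sum q_j |v_j><v_j|:
     tr rho log rho   = sum_i p_i log p_i,
     tr rho log sigma = sum_{i,j} p_i |<v_j|u_i>|^2 log q_j.
   It is finite iff supp rho is contained in supp sigma, i.e. whenever
   p_i > 0 and q_j = 0 we have <v_j|u_i> = 0.  [rel_entropy d rho sigma r]
   says that S(rho||sigma) is finite and equals r. *)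
Definition rel_entropy (d : nat) (rho sigma : bop) (r : R) : Prop :=
  exists p u q v, spectral d rho p u /\ spectral d sigma q v /\
    (forall i j, (i < d * d)%nat -> (j < d * d)%nat ->
        0 < p i -> q j = 0 -> binner d (v j) (u i) = CR 0) /\
    r = Rsum (d * d) (fun i => p i * log2 (p i))
        - Rsum (d * d) (fun i => Rsum (d * d) (fun j =>
             p i * Cnorm2 (binner d (v j) (u i)) * log2 (q j))).

(* Separable states on C^d : C^d: convex hulls of product states
   (in finite dimension the convex hull of pure product states is closed,
   so finite convex combinations of |x (x) y><x (x) y| give all of them). *)
Definition separable (d : nat) (sigma : bop) : Prop :=
  exists (n : nat) (p : nat -> R) (x y : nat -> vec),
    (forall k, (k < n)%nat -> 0 <= p k) /\ Rsum n p = 1 /\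
    (forall k, (k < n)%nat -> unit_vec d (x k) /\ unit_vec d (y k)) /\
    bop_eq d sigma (rank1_sum n p (fun k => tensor (x k) (y k))).

Definition is_glb (E : R -> Prop) (m : R) : Prop :=
  (forall r, E r -> m <= r) /\ (forall b, (forall r, E r -> b <= r) -> b <= m).

(* E_R(rho) = inf { S(rho||sigma) : sigma separable }  (infinite values do not
   affect the infimum since it is finite).  [ER_is d rho e] : E_R(rho) = e. *)
Definition ER_is (d : nat) (rho : bop) (e : R) : Prop :=
  is_glb (fun r => exists sigma, separable d sigma /\ rel_entropy d rho sigma r) e.

Definition prod_overlaps (d : nat) (rho : bop) (r : R) : Prop :=
  exists x y : vec, unit_vec d x /\ unit_vec d y /\
    CR r = quad d rho (tensor x y).

From Stdlib Require Import Reals Lra Lia Setoid Morphisms.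
From mathcomp Require all_boot all_algebra Rstruct.
Open Scope R_scope.

(* Write rho = sum_i p_i |u_i><u_i| and sigma = sum_j q_j |v_j><v_j|.  Then
   S(rho||sigma) = sum_i p_i log p_i - sum_(i,j) W_ij log q_j with
   W_ij = p_i |<v_j|u_i>|^2, a probability distribution on pairs (i, j).  By
   concavity of log, sum W_ij log q_j <= log sum W_ij q_j = log tr(rho sigma),
   and for separable sigma = sum_k r_k |x_k (x) y_k><x_k (x) y_k| the trace
   tr(rho sigma) = sum_k r_k <x_k (x) y_k|rho|x_k (x) y_k> is at most M.  Hence
   S(rho||sigma) >= -S(rho) - log M for every separable sigma.
   Both W being a distribution and S(rho) not depending on the spectral
   decomposition (the overlaps |<u_i|w_k>|^2 of two eigenbases form a doubly
   stochastic matrix, and t log t is convex) rest on Parseval's identity for an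
   orthonormal basis of d^2 vectors, which is reduced to the real fact
   G^T G = 1 -> G G^T = 1 by realification. *)

Definition Copp (z : C) : C := mkC (- Re z) (- Im z).
Definition Csub (z w : C) : C := Cadd z (Copp w).

Lemma C_ext z w : Re z = Re w -> Im z = Im w -> z = w.
Proof. destruct z, w; simpl; intros -> ->; reflexivity. Qed.

Lemma C_ring : ring_theory (CR 0) (CR 1) Cadd Cmul Csub Copp (@eq C).
Proof. constructor; intros; apply C_ext; simpl; ring. Qed.
Add Ring Cring : C_ring.

Lemma CR_add a b : CR (a + b) = Cadd (CR a) (CR b).
Proof. apply C_ext; simpl; ring. Qed.
Lemma CR_mul a b : CR (a * b) = Cmul (CR a) (CR b).
Proof. apply C_ext; simpl; ring. Qed.
Lemma Cconj_add z w : Cconj (Cadd z w) = Cadd (Cconj z) (Cconj w).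
Proof. apply C_ext; simpl; ring. Qed.
Lemma Cconj_mul z w : Cconj (Cmul z w) = Cmul (Cconj z) (Cconj w).
Proof. apply C_ext; simpl; ring. Qed.
Lemma Cconj_involutive z : Cconj (Cconj z) = z.
Proof. apply C_ext; simpl; ring. Qed.
Lemma Cmul_conj_l z : Cmul (Cconj z) z = CR (Cnorm2 z).
Proof. apply C_ext; unfold Cnorm2; simpl; ring. Qed.
Lemma Cnorm2_conj z : Cnorm2 (Cconj z) = Cnorm2 z.
Proof. unfold Cnorm2; simpl; ring. Qed.
Lemma Cnorm2_ge0 z : 0 <= Cnorm2 z.
Proof. unfold Cnorm2; nra. Qed.

Definition delta (i j : nat) : R := if Nat.eqb i j then 1 else 0.

Lemma delta_add_l N i j : delta (N + i) (N + j) = delta i j.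
Proof. unfold delta. destruct (Nat.eqb_spec (N + i) (N + j)), (Nat.eqb_spec i j); auto; lia. Qed.
Lemma delta_lt_add N i j : (i < N)%nat -> delta i (N + j) = 0.
Proof. unfold delta. destruct (Nat.eqb_spec i (N + j)); auto; lia. Qed.
Lemma delta_add_lt N i j : (i < N)%nat -> delta (N + j) i = 0.
Proof. unfold delta. destruct (Nat.eqb_spec (N + j) i); auto; lia. Qed.

Lemma Rsum_ext n f g : (forall i, (i < n)%nat -> f i = g i) -> Rsum n f = Rsum n g.
Proof. induction n; simpl; intros H; auto. rewrite IHn, H; auto. Qed.
Lemma Csum_ext n f g : (forall i, (i < n)%nat -> f i = g i) -> Csum n f = Csum n g.
Proof. induction n; simpl; intros H; auto. rewrite IHn, H; auto. Qed.

#[local] Instance Rsum_proper n : Proper (pointwise_relation nat eq ==> eq) (Rsum n).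
Proof. intros f g H. apply Rsum_ext; auto. Qed.
#[local] Instance Csum_proper n : Proper (pointwise_relation nat eq ==> eq) (Csum n).
Proof. intros f g H. apply Csum_ext; auto. Qed.

Lemma Rsum_add n f g : Rsum n (fun i => f i + g i) = Rsum n f + Rsum n g.
Proof. induction n; simpl; [|rewrite IHn]; ring. Qed.
Lemma Rsum_mull n c f : Rsum n (fun i => c * f i) = c * Rsum n f.
Proof. induction n; simpl; [|rewrite IHn]; ring. Qed.
Lemma Rsum_mulr n c f : Rsum n (fun i => f i * c) = Rsum n f * c.
Proof. induction n; simpl; [|rewrite IHn]; ring. Qed.
Lemma Rsum_opp n f : Rsum n (fun i => - f i) = - Rsum n f.
Proof. induction n; simpl; [|rewrite IHn]; ring. Qed.
Lemma Rsum_0 n : Rsum n (fun _ => 0) = 0.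
Proof. induction n; simpl; [|rewrite IHn]; ring. Qed.
Lemma Rsum_swap n m f :
  Rsum n (fun i => Rsum m (fun j => f i j)) = Rsum m (fun j => Rsum n (fun i => f i j)).
Proof.
induction n; simpl.
- symmetry; apply Rsum_0.
- rewrite IHn, <- Rsum_add; reflexivity.
Qed.
Lemma Rsum_split N M f : Rsum (N + M) f = Rsum N f + Rsum M (fun i => f (N + i)%nat).
Proof.
induction M; simpl.
- rewrite Nat.add_0_r; ring.
- rewrite Nat.add_succ_r; simpl; rewrite IHM; ring.
Qed.

Lemma Rsum_le n f g : (forall i, (i < n)%nat -> f i <= g i) -> Rsum n f <= Rsum n g.
Proof.
induction n; simpl; intros H; [lra|].
assert (f n <= g n) by (apply H; lia). assert (Rsum n f <= Rsum n g) by auto. lra.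
Qed.
Lemma Rsum_ge0 n f : (forall i, (i < n)%nat -> 0 <= f i) -> 0 <= Rsum n f.
Proof. intros H. rewrite <- (Rsum_0 n). apply Rsum_le; auto. Qed.
Lemma Rsum_eq0 n f : (forall i, (i < n)%nat -> 0 <= f i) -> Rsum n f = 0 ->
  forall i, (i < n)%nat -> f i = 0.
Proof.
induction n; simpl; intros H E i Hi; [lia|].
assert (0 <= f n) by auto. assert (0 <= Rsum n f) by (apply Rsum_ge0; auto).
destruct (Nat.eq_dec i n) as [->|]; [lra|].
apply IHn; [intros; apply H|lra|]; lia.
Qed.
Lemma Rsum_delta n f i : (i < n)%nat -> Rsum n (fun k => f k * delta i k) = f i.
Proof.
induction n; intros Hi; [lia|]; simpl. unfold delta at 2.
destruct (Nat.eq_dec i n) as [->|].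
- rewrite Nat.eqb_refl, (Rsum_ext _ _ (fun _ => 0)), Rsum_0; [ring|].
  intros k Hk. unfold delta. destruct (Nat.eqb_spec n k); [lia|ring].
- rewrite IHn by lia. destruct (Nat.eqb_spec i n); [lia|ring].
Qed.

Lemma Csum_add n f g : Csum n (fun i => Cadd (f i) (g i)) = Cadd (Csum n f) (Csum n g).
Proof. induction n; simpl; [apply C_ext; simpl|rewrite IHn]; ring. Qed.
Lemma Csum_mull n c f : Csum n (fun i => Cmul c (f i)) = Cmul c (Csum n f).
Proof. induction n; simpl; [apply C_ext; simpl|rewrite IHn]; ring. Qed.
Lemma Csum_mulr n c f : Csum n (fun i => Cmul (f i) c) = Cmul (Csum n f) c.
Proof. induction n; simpl; [apply C_ext; simpl|rewrite IHn]; ring. Qed.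
Lemma Csum_swap n m f :
  Csum n (fun i => Csum m (fun j => f i j)) = Csum m (fun j => Csum n (fun i => f i j)).
Proof.
induction n; simpl.
- induction m; simpl; [reflexivity|rewrite <- IHm; ring].
- rewrite IHn, <- Csum_add; reflexivity.
Qed.
Lemma Csum_split N M f : Csum (N + M) f = Cadd (Csum N f) (Csum M (fun i => f (N + i)%nat)).
Proof.
induction M; simpl.
- rewrite Nat.add_0_r; apply C_ext; simpl; ring.
- rewrite Nat.add_succ_r; simpl; rewrite IHM; ring.
Qed.
Lemma Cconj_sum n f : Cconj (Csum n f) = Csum n (fun i => Cconj (f i)).
Proof. induction n; simpl; [apply C_ext; simpl; ring|rewrite Cconj_add, IHn; reflexivity]. Qed.
Lemma Csum_CR n f : Csum n (fun i => CR (f i)) = CR (Rsum n f).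
Proof. induction n; simpl; [reflexivity|rewrite IHn, CR_add; reflexivity]. Qed.
Lemma Re_Csum n f : Re (Csum n f) = Rsum n (fun i => Re (f i)).
Proof. induction n; simpl; [|rewrite IHn]; reflexivity. Qed.
Lemma Im_Csum n f : Im (Csum n f) = Rsum n (fun i => Im (f i)).
Proof. induction n; simpl; [|rewrite IHn]; reflexivity. Qed.
Lemma Csum_delta n f i : (i < n)%nat -> Csum n (fun k => Cmul (f k) (CR (delta i k))) = f i.
Proof.
intros Hi. apply C_ext;
  [rewrite Re_Csum, <- (Rsum_delta n (fun k => Re (f k)) i Hi)
  |rewrite Im_Csum, <- (Rsum_delta n (fun k => Im (f k)) i Hi)];
  apply Rsum_ext; intros; simpl; ring.
Qed.

Lemma Csum_pair d (g : nat -> nat -> C) :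
  Csum d (fun a => Csum d (fun b => g a b)) = Csum (d * d) (fun m => g (m / d) (m mod d))%nat.
Proof.
enough (forall n, Csum n (fun a => Csum d (g a)) = Csum (n * d) (fun m => g (m / d) (m mod d))%nat)
  by auto.
induction n; simpl; [reflexivity|].
rewrite IHn, Nat.add_comm, Csum_split. f_equal. apply Csum_ext; intros b Hb.
rewrite (Nat.add_comm _ b), Nat.div_add, Nat.Div0.mod_add, Nat.div_small, Nat.mod_small by lia.
reflexivity.
Qed.

(** * Completeness of orthonormal bases *)

Module OrthogonalMatrix.
Import all_boot all_algebra Rstruct GRing.Theory.
Local Open Scope ring_scope.

Lemma Rsum_big n (f : nat -> R) : Rsum n f = \sum_(i < n) f i.
Proof. by elim: n => [|n IH]; rewrite ?big_ord0 // big_ord_recr /= IH. Qed.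

Lemma delta_ord n (i j : 'I_n) : delta i j = (i == j)%:R.
Proof.
rewrite /delta; case: (Nat.eqb_spec i j) => [/val_inj -> | neq_ij]; first by rewrite eqxx.
by case: eqP => // eq_ij; case: neq_ij; rewrite eq_ij.
Qed.

Lemma orthonormal_rows n (G : nat -> nat -> R) :
  (forall j k, lt j n -> lt k n -> Rsum n (fun i => Rmult (G i j) (G i k)) = delta j k) ->
  forall i l, lt i n -> lt l n -> Rsum n (fun j => Rmult (G i j) (G l j)) = delta i l.
Proof.
move=> Gcols i l /ssrnat.ltP lt_in /ssrnat.ltP lt_ln.
pose A := \matrix_(i0 < n, j0 < n) G i0 j0 : 'M[R]_n.
have AtA : A^T *m A = 1%:M.
  apply/matrixP => j k; rewrite !mxE -delta_ord.
  rewrite -(Gcols j k (ssrnat.ltP (ltn_ord j)) (ssrnat.ltP (ltn_ord k))) Rsum_big.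
  by apply: eq_bigr => m _; rewrite !mxE.
have := congr1 (fun B : 'M[R]_n => B (Ordinal lt_in) (Ordinal lt_ln)) (mulmx1C AtA).
rewrite !mxE -delta_ord Rsum_big => <-.
by apply: eq_bigr => m _; rewrite !mxE.
Qed.

End OrthogonalMatrix.

(* The real 2N x 2N matrix whose columns j and N + j are the real forms of the
   j-th row of F and of i times it. *)
Definition realify (N : nat) (F : nat -> nat -> C) (i j : nat) : R :=
  if Nat.ltb i N then
    (if Nat.ltb j N then Re (F j i) else - Im (F (j - N)%nat i))
  else
    (if Nat.ltb j N then Im (F j (i - N)%nat) else Re (F (j - N)%nat (i - N)%nat)).

Section Realify.
Variables (N : nat) (F : nat -> nat -> C).

Lemma realify_ll i j : (i < N)%nat -> (j < N)%nat -> realify N F i j = Re (F j i).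
Proof. intros. unfold realify. rewrite !(proj2 (Nat.ltb_lt _ N)) by auto. reflexivity. Qed.
Lemma realify_lh i j : (i < N)%nat -> realify N F i (N + j) = - Im (F j i).
Proof.
intros. unfold realify. rewrite (proj2 (Nat.ltb_lt i N)), (proj2 (Nat.ltb_ge (N + j) N)) by lia.
now rewrite Nat.add_comm, Nat.add_sub.
Qed.
Lemma realify_hl i j : (j < N)%nat -> realify N F (N + i) j = Im (F j i).
Proof.
intros. unfold realify. rewrite (proj2 (Nat.ltb_lt j N)), (proj2 (Nat.ltb_ge (N + i) N)) by lia.
now rewrite Nat.add_comm, Nat.add_sub.
Qed.
Lemma realify_hh i j : realify N F (N + i) (N + j) = Re (F j i).
Proof.
unfold realify. rewrite !(proj2 (Nat.ltb_ge (N + _) N)) by lia.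
now rewrite !(Nat.add_comm N), !Nat.add_sub.
Qed.

Hypothesis F_orthonormal_rows : forall k l, (k < N)%nat -> (l < N)%nat ->
  Csum N (fun m => Cmul (Cconj (F k m)) (F l m)) = CR (delta k l).

Let rowdot k l := Csum N (fun m => Cmul (Cconj (F k m)) (F l m)).

Lemma realify_orthonormal_cols j k : (j < N + N)%nat -> (k < N + N)%nat ->
  Rsum (N + N) (fun i => realify N F i j * realify N F i k) = delta j k.
Proof.
assert (Hhi : forall j, (N <= j)%nat -> j = (N + (j - N))%nat) by (intros; lia).
intros Hj Hk. rewrite Rsum_split, <- Rsum_add.
destruct (Nat.lt_ge_cases j N) as [Hj'|Hj']; [|rewrite (Hhi j Hj')];
destruct (Nat.lt_ge_cases k N) as [Hk'|Hk']; try rewrite (Hhi k Hk').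
- transitivity (Re (rowdot j k)).
  + unfold rowdot; rewrite Re_Csum; apply Rsum_ext; intros.
    rewrite !realify_ll, !realify_hl by lia. simpl; ring.
  + unfold rowdot; rewrite F_orthonormal_rows by lia; reflexivity.
- transitivity (- Im (rowdot j (k - N)%nat)).
  + unfold rowdot; rewrite Im_Csum, <- Rsum_opp; apply Rsum_ext; intros.
    rewrite realify_ll, realify_lh, realify_hl, realify_hh by lia. simpl; ring.
  + unfold rowdot; rewrite F_orthonormal_rows, delta_lt_add by lia. simpl; ring.
- transitivity (Im (rowdot (j - N)%nat k)).
  + unfold rowdot; rewrite Im_Csum; apply Rsum_ext; intros.
    rewrite realify_lh, realify_hh, realify_ll, realify_hl by lia. simpl; ring.
  + unfold rowdot; rewrite F_orthonormal_rows, delta_add_lt by lia. reflexivity.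
- transitivity (Re (rowdot (j - N)%nat (k - N)%nat)).
  + unfold rowdot; rewrite Re_Csum; apply Rsum_ext; intros.
    rewrite !realify_lh, !realify_hh by lia. simpl; ring.
  + unfold rowdot; rewrite F_orthonormal_rows, delta_add_l by lia. reflexivity.
Qed.

Lemma complex_orthonormal_cols m m' : (m < N)%nat -> (m' < N)%nat ->
  Csum N (fun k => Cmul (F k m) (Cconj (F k m'))) = CR (delta m m').
Proof.
intros Hm Hm'.
pose proof (OrthogonalMatrix.orthonormal_rows (N + N) (realify N F) realify_orthonormal_cols)
  as G_rows.
apply C_ext.
- rewrite Re_Csum. rewrite <- (G_rows m m') by lia. rewrite Rsum_split, <- Rsum_add.
  apply Rsum_ext; intros. rewrite !realify_ll, !realify_lh by lia. simpl; ring.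
- rewrite Im_Csum. simpl.
  rewrite <- (Ropp_0), <- (delta_lt_add N m m' Hm), <- (G_rows m (N + m')%nat) by lia.
  rewrite Rsum_split, <- Rsum_add, <- Rsum_opp.
  apply Rsum_ext; intros. rewrite realify_ll, realify_hl, realify_lh, realify_hh by lia. simpl; ring.
Qed.

End Realify.

Definition orthonormal (d : nat) (e : nat -> bvec) : Prop :=
  forall k l, (k < d * d)%nat -> (l < d * d)%nat -> binner d (e k) (e l) = CR (delta k l).

Lemma binner_conj d u v : binner d v u = Cconj (binner d u v).
Proof.
unfold binner. rewrite Cconj_sum. apply Csum_ext; intros.
rewrite Cconj_sum. apply Csum_ext; intros. rewrite Cconj_mul, Cconj_involutive. ring.
Qed.

Lemma Cnorm2_binner_sym d u v : Cnorm2 (binner d v u) = Cnorm2 (binner d u v).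
Proof. now rewrite binner_conj, Cnorm2_conj. Qed.

Lemma parseval d e z : orthonormal d e ->
  Rsum (d * d) (fun k => Cnorm2 (binner d (e k) z)) = Re (binner d z z).
Proof.
intros He.
set (F := fun k m => e k (m / d)%nat (m mod d)%nat).
set (zf := fun m => z (m / d)%nat (m mod d)%nat).
assert (Hflat : forall u v, binner d u v =
  Csum (d * d) (fun m => Cmul (Cconj (u (m / d) (m mod d))) (v (m / d) (m mod d)))%nat)
  by (intros; apply Csum_pair).
assert (F_cols := complex_orthonormal_cols (d * d) F
  ltac:(intros k l Hk Hl; unfold F; rewrite <- Hflat; auto)).
enough (E : CR (Rsum (d * d) (fun k => Cnorm2 (binner d (e k) z))) = binner d z z)
  by (rewrite <- E; reflexivity).
rewrite <- Csum_CR.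
transitivity (Csum (d * d) (fun k => Csum (d * d) (fun m' => Csum (d * d) (fun m =>
   Cmul (Cmul (Cconj (zf m')) (zf m)) (Cmul (F k m') (Cconj (F k m))))))).
- apply Csum_ext; intros k Hk. rewrite <- Cmul_conj_l, Hflat, Cconj_sum, <- Csum_mulr.
  apply Csum_ext; intros. rewrite <- Csum_mull.
  apply Csum_ext; intros. unfold F, zf. rewrite Cconj_mul, Cconj_involutive. ring.
- rewrite Csum_swap, Hflat. apply Csum_ext; intros m' Hm'.
  rewrite Csum_swap.
  etransitivity; [|exact (Csum_delta (d * d) (fun m => Cmul (Cconj (zf m')) (zf m)) m' Hm')].
  apply Csum_ext; intros. rewrite Csum_mull, F_cols; auto.
Qed.

Lemma quad_ext d A B w : bop_eq d A B -> quad d A w = quad d B w.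
Proof.
intros H. unfold quad. do 4 (apply Csum_ext; intros).
rewrite H by assumption. reflexivity.
Qed.

Lemma btrace_ext d A B : bop_eq d A B -> btrace d A = btrace d B.
Proof. intros H. unfold btrace. do 2 (apply Csum_ext; intros). apply H; assumption. Qed.

Lemma Csum4_mul d (X Y : nat -> nat -> C) c :
  Csum d (fun a => Csum d (fun b => Csum d (fun a' => Csum d (fun b' =>
    Cmul c (Cmul (X a b) (Y a' b'))))))
  = Cmul c (Cmul (Csum d (fun a => Csum d (X a))) (Csum d (fun a' => Csum d (Y a')))).
Proof.
rewrite <- Csum_mulr, <- Csum_mull. apply Csum_ext; intros.
rewrite <- Csum_mulr, <- Csum_mull. apply Csum_ext; intros.
rewrite <- !Csum_mull. apply Csum_ext; intros.
rewrite <- !Csum_mull. apply Csum_ext; intros. ring.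
Qed.

Lemma quad_rank1_sum d n lam u z : quad d (rank1_sum n lam u) z =
  CR (Rsum n (fun k => lam k * Cnorm2 (binner d (u k) z))).
Proof.
unfold quad, rank1_sum.
setoid_rewrite <- Csum_mulr. setoid_rewrite <- Csum_mull.
do 4 setoid_rewrite (Csum_swap d n).
rewrite <- Csum_CR. apply Csum_ext; intros k Hk.
rewrite CR_mul, <- Cmul_conj_l, <- binner_conj.
unfold binner. rewrite <- Csum4_mul.
do 4 (apply Csum_ext; intros). ring.
Qed.

Lemma btrace_rank1_sum d n lam u : btrace d (rank1_sum n lam u) =
  Csum n (fun k => Cmul (CR (lam k)) (binner d (u k) (u k))).
Proof.
unfold btrace, rank1_sum, binner.
setoid_rewrite (Csum_swap d n). rewrite Csum_swap.
apply Csum_ext; intros. rewrite <- Csum_mull.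
apply Csum_ext; intros. rewrite <- Csum_mull.
apply Csum_ext; intros. ring.
Qed.

Section Spectral.
Variables (d : nat) (rho : bop) (p : nat -> R) (u : nat -> bvec).
Hypothesis rho_spectral : spectral d rho p u.

Lemma spectral_orthonormal : orthonormal d u.
Proof. exact (proj1 rho_spectral). Qed.

Lemma quad_spectral z :
  quad d rho z = CR (Rsum (d * d) (fun k => p k * Cnorm2 (binner d (u k) z))).
Proof. rewrite (quad_ext _ _ _ _ (proj2 rho_spectral)). apply quad_rank1_sum. Qed.

Lemma quad_spectral_basis i : (i < d * d)%nat -> quad d rho (u i) = CR (p i).
Proof.
intros Hi. rewrite quad_spectral, <- (Rsum_delta (d * d) p i Hi). f_equal.
apply Rsum_ext; intros k Hk. rewrite spectral_orthonormal by assumption.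
unfold delta. rewrite Nat.eqb_sym. destruct (Nat.eqb i k); unfold Cnorm2; simpl; ring.
Qed.

Lemma btrace_spectral : btrace d rho = CR (Rsum (d * d) p).
Proof.
rewrite (btrace_ext _ _ _ (proj2 rho_spectral)), btrace_rank1_sum, <- Csum_CR.
apply Csum_ext; intros k Hk. rewrite spectral_orthonormal by assumption.
unfold delta. rewrite Nat.eqb_refl. apply C_ext; simpl; ring.
Qed.

Lemma spectral_weight_ge0 : (forall w, 0 <= Re (quad d rho w)) ->
  forall i, (i < d * d)%nat -> 0 <= p i.
Proof. intros Hpsd i Hi. specialize (Hpsd (u i)). now rewrite quad_spectral_basis in Hpsd. Qed.

End Spectral.

Lemma separable_quad d sigma : separable d sigma ->
  exists n p' x y, (forall k, (k < n)%nat -> 0 <= p' k) /\ Rsum n p' = 1 /\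
    (forall k, (k < n)%nat -> unit_vec d (x k) /\ unit_vec d (y k)) /\
    forall z, quad d sigma z =
      CR (Rsum n (fun k => p' k * Cnorm2 (binner d (tensor (x k) (y k)) z))).
Proof.
intros (n & p' & x & y & Hp' & Hsum & Hxy & Hsigma).
exists n, p', x, y. split; [|split; [|split]]; auto.
intros z. rewrite (quad_ext _ _ _ _ Hsigma). apply quad_rank1_sum.
Qed.

(** * Convexity of t ln t and concavity of ln *)

Lemma ln_le_sub1 x : 0 < x -> ln x <= x - 1.
Proof. intros Hx. generalize (exp_ineq1_le (ln x)). rewrite exp_ln by assumption. lra. Qed.

Lemma ln_div x y : 0 < x -> 0 < y -> ln (x / y) = ln x - ln y.
Proof. intros. unfold Rdiv. rewrite ln_mult, ln_Rinv by (auto using Rinv_0_lt_compat). ring. Qed.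

Lemma ln_le x y : 0 < x -> x <= y -> ln x <= ln y.
Proof. intros Hx [Hxy| ->]; [left; apply ln_increasing|]; lra. Qed.

Lemma xlnx_tangent p l : 0 <= p -> 0 < l ->
  l * ln l + (ln l + 1) * (p - l) <= p * ln p.
Proof.
intros [Hp| <-] Hl; [|lra].
assert (H := ln_le_sub1 (l / p) ltac:(apply Rdiv_lt_0_compat; auto)).
rewrite ln_div in H by assumption.
assert (p * (ln l - ln p) <= p * (l / p - 1)) by (apply Rmult_le_compat_l; lra).
replace (p * (l / p - 1)) with (l - p) in * by (field; lra). nra.
Qed.

Lemma ln_tangent w x T : 0 <= w -> 0 < T -> (0 < w -> 0 < x) ->
  w * ln x <= w * ln T + w * (x / T - 1).
Proof.
intros [Hw| <-] HT Hx; [|lra]. specialize (Hx Hw).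
assert (H := ln_le_sub1 (x / T) ltac:(apply Rdiv_lt_0_compat; auto)).
rewrite ln_div in H by assumption. nra.
Qed.

Lemma xlnx_sum_doubly_stochastic n p (B : nat -> nat -> R) :
  (forall i k, (i < n)%nat -> (k < n)%nat -> 0 <= B i k) ->
  (forall k, (k < n)%nat -> Rsum n (fun i => B i k) = 1) ->
  (forall i, (i < n)%nat -> Rsum n (fun k => B i k) = 1) ->
  (forall i, (i < n)%nat -> 0 <= p i) ->
  let lam k := Rsum n (fun i => B i k * p i) in
  Rsum n (fun k => lam k * ln (lam k)) <= Rsum n (fun i => p i * ln (p i)).
Proof.
intros HB Hcols Hrows Hp lam.
apply Rle_trans with (Rsum n (fun k => Rsum n (fun i => B i k * (p i * ln (p i))))).
- apply Rsum_le; intros k Hk.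
  assert (Bp_ge0 : forall i, (i < n)%nat -> 0 <= B i k * p i)
    by (intros; apply Rmult_le_pos; auto).
  destruct (Rsum_ge0 _ _ Bp_ge0) as [Hl|Hl]; fold (lam k) in Hl.
  + apply Rle_trans with
      (Rsum n (fun i => B i k * (lam k * ln (lam k) + (ln (lam k) + 1) * (p i - lam k)))).
    * rewrite (Rsum_ext _ _ (fun i => (lam k * ln (lam k) - (ln (lam k) + 1) * lam k) * B i k
                                      + (ln (lam k) + 1) * (B i k * p i))) by (intros; ring).
      rewrite Rsum_add, !Rsum_mull, Hcols by assumption. fold (lam k). lra.
    * apply Rsum_le; intros i Hi. apply Rmult_le_compat_l; auto. apply xlnx_tangent; auto.
  + rewrite <- Hl, Rmult_0_l, <- (Rsum_0 n). apply Req_le, Rsum_ext; intros i Hi.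
    rewrite <- Rmult_assoc, (Rsum_eq0 _ _ Bp_ge0 (eq_sym Hl)) by assumption. ring.
- rewrite Rsum_swap. apply Req_le, Rsum_ext; intros i Hi.
  rewrite Rsum_mulr, Hrows by assumption. ring.
Qed.

Lemma ln_jensen n m (w : nat -> nat -> R) (x : nat -> R) :
  (forall i j, (i < n)%nat -> (j < m)%nat -> 0 <= w i j) ->
  (forall j, (j < m)%nat -> 0 <= x j) ->
  (forall i j, (i < n)%nat -> (j < m)%nat -> 0 < w i j -> 0 < x j) ->
  Rsum n (fun i => Rsum m (fun j => w i j)) = 1 ->
  let T := Rsum n (fun i => Rsum m (fun j => w i j * x j)) in
  0 < T /\ Rsum n (fun i => Rsum m (fun j => w i j * ln (x j))) <= ln T.
Proof.
intros Hw Hx Hwx Hsum T.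
assert (wx_ge0 : forall i, (i < n)%nat -> 0 <= Rsum m (fun j => w i j * x j))
  by (intros; apply Rsum_ge0; intros; apply Rmult_le_pos; auto).
assert (HT : 0 < T).
{ destruct (Rsum_ge0 _ _ wx_ge0) as [HT|HT]; [exact HT|exfalso].
  assert (w0 : forall i j, (i < n)%nat -> (j < m)%nat -> w i j = 0).
  { intros i j Hi Hj.
    assert (E := Rsum_eq0 _ _ (fun j Hj => Rmult_le_pos _ _ (Hw i j Hi Hj) (Hx j Hj))
                   (Rsum_eq0 _ _ wx_ge0 (eq_sym HT) i Hi) j Hj).
    destruct (Hw i j Hi Hj) as [P|P]; [specialize (Hwx i j Hi Hj P); nra|auto]. }
  rewrite (Rsum_ext _ _ (fun _ => 0)), Rsum_0 in Hsum; [lra|].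
  intros i Hi. rewrite <- (Rsum_0 m). apply Rsum_ext; auto. }
split; [exact HT|].
apply Rle_trans with
  (Rsum n (fun i => Rsum m (fun j => (ln T - 1) * w i j + / T * (w i j * x j)))).
- apply Rsum_le; intros i Hi. apply Rsum_le; intros j Hj.
  apply Rle_trans with (w i j * ln T + w i j * (x j / T - 1)).
  + apply ln_tangent; auto. intros; eapply Hwx; eauto.
  + apply Req_le; unfold Rdiv; ring.
- apply Req_le.
  rewrite (Rsum_ext _ _ (fun i => (ln T - 1) * Rsum m (fun j => w i j)
                                   + / T * Rsum m (fun j => w i j * x j)))
    by (intros; rewrite Rsum_add, !Rsum_mull; reflexivity).
  rewrite Rsum_add, !Rsum_mull, Hsum. fold T. field. lra.
Qed.

Lemma parseval_orthonormal d e f i : orthonormal d e -> orthonormal d f -> (i < d * d)%nat ->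
  Rsum (d * d) (fun k => Cnorm2 (binner d (e k) (f i))) = 1.
Proof. intros He Hf Hi. rewrite parseval, Hf by assumption. unfold delta. now rewrite Nat.eqb_refl. Qed.

Lemma spectral_xlnx_le d rho p u lam w :
  spectral d rho p u -> spectral d rho lam w -> (forall i, (i < d * d)%nat -> 0 <= p i) ->
  Rsum (d * d) (fun k => lam k * ln (lam k)) <= Rsum (d * d) (fun i => p i * ln (p i)).
Proof.
intros Hu Hw Hp.
set (B i k := Cnorm2 (binner d (u i) (w k))).
assert (Hlam : forall k, (k < d * d)%nat -> lam k = Rsum (d * d) (fun i => B i k * p i)).
{ intros k Hk. assert (E := f_equal Re (quad_spectral_basis _ _ _ _ Hw k Hk)).
  rewrite (quad_spectral _ _ _ _ Hu) in E. simpl in E. rewrite <- E.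
  apply Rsum_ext; intros. unfold B. ring. }
rewrite (Rsum_ext _ _ (fun k => Rsum (d * d) (fun i => B i k * p i)
                                * ln (Rsum (d * d) (fun i => B i k * p i))))
  by (intros; rewrite Hlam; auto).
pose proof (spectral_orthonormal _ _ _ _ Hu) as u_on.
pose proof (spectral_orthonormal _ _ _ _ Hw) as w_on.
apply xlnx_sum_doubly_stochastic; auto.
- intros; apply Cnorm2_ge0.
- intros k Hk. apply parseval_orthonormal; auto.
- intros i Hi. rewrite <- (parseval_orthonormal d w u i) by auto.
  apply Rsum_ext; intros. apply Cnorm2_binner_sym.
Qed.

Lemma trace_product_le_overlap d rho p u sigma q v M :
  spectral d rho p u -> spectral d sigma q v -> separable d sigma ->
  is_upper_bound (prod_overlaps d rho) M ->
  Rsum (d * d) (fun i => Rsum (d * d) (fun j => p i * Cnorm2 (binner d (v j) (u i)) * q j))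
  <= M.
Proof.
intros Hu Hv Hsep HM.
destruct (separable_quad _ _ Hsep) as (n & p' & x & y & Hp' & Hsum & Hxy & Hsigma).
set (overlap k := Rsum (d * d) (fun i => p i * Cnorm2 (binner d (u i) (tensor (x k) (y k))))).
assert (tr_rho_sigma :
  Rsum (d * d) (fun i => Rsum (d * d) (fun j => p i * Cnorm2 (binner d (v j) (u i)) * q j))
  = Rsum n (fun k => p' k * overlap k)).
{ transitivity (Rsum (d * d) (fun i => p i * Re (quad d sigma (u i)))).
  - apply Rsum_ext; intros. rewrite (quad_spectral _ _ _ _ Hv). simpl.
    rewrite <- Rsum_mull. apply Rsum_ext; intros. ring.
  - transitivity (Rsum (d * d) (fun i => Rsum n (fun k =>
      p' k * (p i * Cnorm2 (binner d (u i) (tensor (x k) (y k))))))).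
    + apply Rsum_ext; intros. rewrite Hsigma. simpl. rewrite <- Rsum_mull.
      apply Rsum_ext; intros. rewrite Cnorm2_binner_sym. ring.
    + rewrite Rsum_swap. apply Rsum_ext; intros. unfold overlap. now rewrite Rsum_mull. }
rewrite tr_rho_sigma, <- (Rmult_1_l M), <- Hsum, <- Rsum_mulr.
apply Rsum_le; intros k Hk. apply Rmult_le_compat_l; [auto|].
apply HM. destruct (Hxy k Hk) as [Hx Hy]. exists (x k), (y k).
split; [|split]; auto. now rewrite (quad_spectral _ _ _ _ Hu).
Qed.

Lemma trace_ln_le_ln_overlap d rho p u sigma q v M :
  is_state d rho -> spectral d rho p u -> spectral d sigma q v -> separable d sigma ->
  (forall i j, (i < d * d)%nat -> (j < d * d)%nat ->
     0 < p i -> q j = 0 -> binner d (v j) (u i) = CR 0) ->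
  is_upper_bound (prod_overlaps d rho) M ->
  Rsum (d * d) (fun i => Rsum (d * d) (fun j => p i * Cnorm2 (binner d (v j) (u i)) * ln (q j)))
  <= ln M.
Proof.
intros [[_ rho_psd] rho_tr] Hu Hv Hsep Hsupp HM.
assert (p_ge0 := spectral_weight_ge0 _ _ _ _ Hu rho_psd).
assert (p_sum : Rsum (d * d) p = 1).
{ rewrite (btrace_spectral _ _ _ _ Hu) in rho_tr. exact (f_equal Re rho_tr). }
assert (q_ge0 : forall j, (j < d * d)%nat -> 0 <= q j).
{ apply (spectral_weight_ge0 _ _ _ _ Hv). intros z.
  destruct (separable_quad _ _ Hsep) as (n & p' & x & y & Hp' & _ & _ & ->). simpl.
  apply Rsum_ge0; intros. apply Rmult_le_pos; auto using Cnorm2_ge0. }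
destruct (ln_jensen (d * d) (d * d) (fun i j => p i * Cnorm2 (binner d (v j) (u i))) q)
  as [T_pos Jensen].
- intros. apply Rmult_le_pos; auto using Cnorm2_ge0.
- exact q_ge0.
- intros i j Hi Hj Hw. destruct (q_ge0 j Hj) as [|q0]; [assumption|exfalso].
  destruct (p_ge0 i Hi) as [pi_pos|pi0].
  + rewrite (Hsupp i j Hi Hj pi_pos (eq_sym q0)) in Hw. unfold Cnorm2 in Hw; simpl in Hw. lra.
  + rewrite <- pi0 in Hw. lra.
- rewrite <- p_sum. apply Rsum_ext; intros i Hi.
  rewrite Rsum_mull, parseval_orthonormal by eauto using spectral_orthonormal. ring.
- eapply Rle_trans; [exact Jensen|].
  apply ln_le; [exact T_pos|]. exact (trace_product_le_overlap _ _ _ _ _ _ _ _ Hu Hv Hsep HM).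
Qed.

Lemma Rsum_mul_log2 n f g :
  Rsum n (fun i => f i * log2 (g i)) = Rsum n (fun i => f i * ln (g i)) / ln 2.
Proof. unfold Rdiv. rewrite <- Rsum_mulr. apply Rsum_ext; intros. unfold log2, Rdiv. ring. Qed.

Theorem mainTheorem9 :
  forall (d : nat) (rho : bop), is_state d rho ->
  forall (e M s : R),
    ER_is d rho e ->
    is_lub (prod_overlaps d rho) M ->
    vN_entropy d rho s ->
    e >= - log2 M - s.
Proof.
intros d rho rho_state e M s HER HM (lam & w & Hw & ->).
apply Rle_ge, (proj2 HER). intros r (sigma & Hsep & p & u & q & v & Hu & Hv & Hsupp & ->).
assert (p_ge0 := spectral_weight_ge0 _ _ _ _ Hu (proj2 (proj1 rho_state))).
assert (entropy_le := spectral_xlnx_le _ _ _ _ _ _ Hu Hw p_ge0).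
assert (cross_le := trace_ln_le_ln_overlap _ _ _ _ _ _ _ M rho_state Hu Hv Hsep Hsupp (proj1 HM)).
assert (ln2_pos : 0 < / ln 2) by (apply Rinv_0_lt_compat; generalize ln_lt_2; lra).
setoid_rewrite Rsum_mul_log2. unfold log2, Rdiv. rewrite Rsum_mulr.
nra.
Qed.
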